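(* For any two simple graphs $G,F$ and any positive integer $k$, $$\mathrm{wsat}(G,F)\geq\frac{1}{k}\cdot\mathrm{rk}\text{-}\mathrm{sat}\left(G^k,\{F^k_e:\,e\in E(F)\}\right).$$
   Context: For a simple graph $G$, $G^k$ is the multigraph obtained from $G$ by taking $k$ instances of every edge. For $e\in E(F)$, $F^k_e$ is the multigraph on $V(F)$ containing each edge of $E(F)\setminus\{e\}$ exactly $k$ times and the edge $e$ exactly once. For simple graphs, $\mathrm{wsat}(G,F)$ is the minimum number of edges of a spanning subgraph $H\subseteq G$ from which $G$ can be obtained by adding the missing edges one at a time, each added edge creating a new copy of $F$ containing it. For a multigraph $G$ (edges are a multiset of pairs, distinct instances being distinct elements) and a family $\mathcal{F}$ of multigraphs, a matroid $M$ on $E(G)$ is weakly $\mathcal{F}$-saturated if every copy $\tilde F$ in $G$ of every $F\in\mathcal{F}$ is a cycle of $M$, i.e. $\mathrm{rk}_M(E(\tilde F)\setminus\{e\})=\mathrm{rk}_M(E(\tilde F))$ for all $e\in E(\tilde F)$; $\mathrm{rk}\text{-}\mathrm{sat}(G,\mathcal{F})$ is the maximum rank of such a matroid. *)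

From mathcomp Require Import all_boot.
From mathcomp Require Import boolp.

Set Implicit Arguments.
Unset Strict Implicit.
Unset Printing Implicit Defensive.

Definition simple_graph (V : finType) (E : {set {set V}}) : Prop :=
  forall e, e \in E -> #|e| = 2.

Definition is_copy (V W : finType) (EH : {set {set V}}) (EF : {set {set W}})
  (phi : W -> V) : Prop :=
  injective phi /\ forall f, f \in EF -> phi @: f \in EH.

Definition copy_edges (V W : finType) (EF : {set {set W}}) (phi : W -> V)
  : {set {set V}} := (fun f : {set W} => phi @: f) @: EF.

(* H is weakly F-saturated in G: H is a spanning subgraph of G and the
   missing edges can be added one at a time (in the order s), each added
   edge lying in a copy of F in the current graph. *)
Definition wsat_ok (V W : finType) (EG : {set {set V}}) (EF : {set {set W}})
  (H : {set {set V}}) : Prop :=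
  H \subset EG /\
  exists s : seq {set V},
    [/\ uniq s, [set x in s] = EG :\: H &
        forall i, i < size s ->
          exists phi : W -> V,
            is_copy (H :|: [set x in take i.+1 s]) EF phi /\
            nth set0 s i \in copy_edges EF phi].

(* wsat(G,F): minimum number of edges of a weakly F-saturated H in G
   (H = G always qualifies, so #|EG| is a valid initial value). *)
Definition wsat (V W : finType) (EG : {set {set V}}) (EF : {set {set W}}) : nat :=
  \big[minn/#|EG|]_(H : {set {set V}} | `[< wsat_ok EG EF H >]) #|H|.

Definition is_matroid (X : finType) (D : {set X}) (I : {set {set X}}) : Prop :=
  [/\ forall B : {set X}, B \in I -> B \subset D,
      set0 \in I,
      forall A B : {set X}, B \in I -> A \subset B -> A \in I &
      forall A B : {set X}, A \in I -> B \in I -> #|A| < #|B| ->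
        exists2 x, x \in B :\: A & x |: A \in I].

Definition mrank (X : finType) (I : {set {set X}}) (A : {set X}) : nat :=
  \max_(B in I | B \subset A) #|B|.

Definition is_cycle (X : finType) (I : {set {set X}}) (C : {set X}) : Prop :=
  forall x, x \in C -> mrank I (C :\ x) = mrank I C.

(* A multigraph on V: a finite set D of edge instances (in a finType X),
   each with an endpoint set ends x.  A copy of (W, DF, endsF) in
   (V, DG, endsG) is given by an injective vertex map phi and an injective
   edge-instance map psi compatible with endpoints; C is its edge set. *)
Definition mcopy (V W X Y : finType) (DG : {set X}) (endsG : X -> {set V})
  (DF : {set Y}) (endsF : Y -> {set W}) (C : {set X}) : Prop :=
  exists (phi : W -> V) (psi : Y -> X),
    [/\ injective phi, {in DF &, injective psi},
        forall y, y \in DF -> psi y \in DG /\ endsG (psi y) = phi @: endsF y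
      & C = psi @: DF].

(* G^k: edge instances (e, i), e in E(G), i < k; endpoints = fst. *)
Definition Gk_edges (V : finType) (k : nat) (EG : {set {set V}})
  : {set ({set V} * 'I_k)} := [set x | x.1 \in EG].

(* F^k_e: each edge of E(F) \ {e} k times, e exactly once (instance 0). *)
Definition Fke_edges (W : finType) (k : nat) (EF : {set {set W}}) (e : {set W})
  : {set ({set W} * 'I_k)} :=
  [set y | (y.1 \in EF :\ e) || ((y.1 == e) && (val y.2 == 0))].

Definition weakly_Fk_sat (V W : finType) (k : nat) (EG : {set {set V}})
  (EF : {set {set W}}) (I : {set {set ({set V} * 'I_k)}}) : Prop :=
  forall (e : {set W}) (C : {set ({set V} * 'I_k)}), e \in EF ->
    mcopy (Gk_edges k EG) fst (Fke_edges k EF e) fst C -> is_cycle I C.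

(* rk-sat(G^k, {F^k_e}): maximum rank of a weakly saturated matroid
   (the trivial matroid {set0} qualifies, so 0 is a valid initial value). *)
Definition rksat (V W : finType) (k : nat) (EG : {set {set V}})
  (EF : {set {set W}}) : nat :=
  \max_(I : {set {set ({set V} * 'I_k)}} |
          `[< is_matroid (Gk_edges k EG) I /\ weakly_Fk_sat EG EF I >])
    mrank I (Gk_edges k EG).

(* Let H be weakly F-saturated in G and let M be a matroid on E(G^k) in which
   every copy of every F^k_e is a cycle.  When an edge g is added to the
   current graph H' through a copy of F sending f to g, each of the k instances
   (g, j) of g lies in a copy of F^k_f whose other edges are instances of edges
   of H', hence (g, j) is in the closure of E(H'^k).  Adding all missing edges
   therefore never raises the rank, so rk M = rk E(H^k) <= k |E(H)|. *)
From mathcomp Require Import all_boot.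
From mathcomp Require Import boolp.

Set Implicit Arguments.
Unset Strict Implicit.
Unset Printing Implicit Defensive.

Section MatroidRank.
Variables (X : finType) (I : {set {set X}}).

Lemma mrank_le_card (A : {set X}) : mrank I A <= #|A|.
Proof. by apply/bigmax_leqP => B /andP[_ sBA]; apply: subset_leq_card. Qed.

Lemma card_le_mrank (A B : {set X}) : B \in I -> B \subset A -> #|B| <= mrank I A.
Proof. by move=> BI sBA; apply: leq_bigmax_cond; rewrite BI sBA. Qed.

Lemma mrankS (A A' : {set X}) : A \subset A' -> mrank I A <= mrank I A'.
Proof.
move=> sAA'; apply/bigmax_leqP => B /andP[BI sBA].
by apply: card_le_mrank BI (subset_trans sBA sAA').
Qed.

Variable D : {set X}.
Hypothesis matroidI : is_matroid D I.

Lemma mrank_basis (A : {set X}) :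
  exists2 B, (B \in I) && (B \subset A) & mrank I A = #|B|.
Proof.
have [_ I0 _ _] := matroidI.
have P0 : (set0 \in I) && (set0 \subset A) by rewrite I0 sub0set.
rewrite /mrank (bigmax_eq_arg set0 P0).
by case: arg_maxnP => // B PB _; exists B.
Qed.

Lemma matroid_augment (J B : {set X}) : J \in I -> B \in I -> #|J| <= #|B| ->
  exists J', [/\ J' \in I, J \subset J', J' \subset J :|: B & #|J'| = #|B|].
Proof.
have [_ _ _ augment] := matroidI.
move=> JI BI leJB; move gap: (#|B| - #|J|) => n.
elim: n J gap JI leJB => [|n IHn] J gap JI leJB.
  exists J; split; rewrite ?subsetUl //.
  by apply/eqP; rewrite eqn_leq leJB -subn_eq0 gap.
have [|y /setDP[yB yJ] yJI] := augment _ _ JI BI; first by rewrite -subn_gt0 gap.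
have [||J' [J'I sJ sJ' cJ']] := IHn (y |: J) _ yJI.
- by rewrite cardsU1 yJ add1n subnS gap.
- by rewrite cardsU1 yJ add1n -subn_gt0 gap.
exists J'; split => //; first exact: subset_trans (subsetUr _ _) sJ.
apply: (subset_trans sJ'); apply/subsetP => z; rewrite !inE.
by case/orP => [/orP[/eqP->|->]|->]; rewrite ?yB ?orbT.
Qed.

(* If C \ x has a basis J, augmenting J by a basis of x |: A either picks up
   x, against rk (C \ x) = rk C, or stays inside A. *)
Lemma mrank_setU1_cycle (C A : {set X}) x : is_cycle I C -> x \in C ->
  C :\ x \subset A -> mrank I (x |: A) = mrank I A.
Proof.
move=> cycC xC sCA; apply/eqP; rewrite eqn_leq (mrankS (subsetUr _ _)) andbT.
have [B /andP[BI sB] rkB] := mrank_basis (x |: A).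
have [J /andP[JI sJ] rkJ] := mrank_basis (C :\ x).
have leJB : #|J| <= #|B|.
  by rewrite -rkJ -rkB (leq_trans (mrankS sCA)) // mrankS ?subsetUr.
have [J' [J'I sJJ' sJ' cardJ']] := matroid_augment JI BI leJB.
rewrite rkB -cardJ'.
have xJ : x \notin J by apply/negP => /(subsetP sJ); rewrite !inE eqxx.
have [_ _ subI _] := matroidI.
have [xJ'|xJ'] := boolP (x \in J').
  have xJI : x |: J \in I by apply: subI J'I _; rewrite subUset sub1set xJ' sJJ'.
  have sxJC : x |: J \subset C by rewrite subUset sub1set xC (subset_trans sJ) ?subD1set.
  by have := card_le_mrank xJI sxJC; rewrite -(cycC x xC) rkJ cardsU1 xJ ltnn.
apply: card_le_mrank => //; apply/subsetP => z zJ'.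
have := subsetP sJ' z zJ'; rewrite inE => /orP[/(subsetP sJ)/(subsetP sCA)//|].
move/(subsetP sB); rewrite in_setU1 => /orP[/eqP zx|//].
by rewrite -zx zJ' in xJ'.
Qed.

Lemma mrank_setU_cycles (A B : {set X}) :
  (forall x, x \in B -> exists2 C, is_cycle I C & x \in C /\ C :\ x \subset A) ->
  mrank I (A :|: B) = mrank I A.
Proof.
move cardB: #|B| => n; elim: n B cardB => [|n IHn] B cardB spanB.
  by move/eqP: cardB; rewrite cards_eq0 => /eqP ->; rewrite setU0.
have /card_gt0P[x xB] : 0 < #|B| by rewrite cardB.
have [C cycC [xC sCA]] := spanB x xB.
rewrite -(setD1K xB) setUCA (mrank_setU1_cycle cycC xC).
  apply: IHn => [|y /setD1P[_ yB]]; last exact: spanB.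
  by move: cardB; rewrite (cardsD1 x B) xB add1n => -[].
exact: subset_trans sCA (subsetUl _ _).
Qed.

End MatroidRank.

Lemma card_Gk_edges (V : finType) (k : nat) (S : {set {set V}}) :
  #|Gk_edges k S| = k * #|S|.
Proof.
have -> : Gk_edges k S = setX S [set: 'I_k].
  by apply/setP => -[a b]; rewrite !inE andbT.
by rewrite cardsX cardsT card_ord mulnC.
Qed.

Section Blowup.
Variables (V W : finType) (k : nat) (EG : {set {set V}}) (EF : {set {set W}}).

(* The copy of F^k_f sends the single instance of f to (phi f, j) and every
   other instance (f', i) to (phi f', i). *)
Lemma Fke_copy_through (EH : {set {set V}}) (phi : W -> V) f (j : 'I_k) :
  EH \subset EG -> is_copy EH EF phi -> f \in EF ->
  exists2 C, mcopy (Gk_edges k EG) fst (Fke_edges k EF f) fst C &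
    (phi @: f, j) \in C /\ C :\ (phi @: f, j) \subset Gk_edges k (EH :\ phi @: f).
Proof.
move=> sHG [phi_inj phiE] fEF.
have k_gt0 : 0 < k by case: j => i; apply: leq_ltn_trans (leq0n i).
pose DF := Fke_edges k EF f.
pose psi (y : {set W} * 'I_k) := if y.1 == f then (phi @: f, j) else (phi @: y.1, y.2).
have inEF y : y \in DF -> y.1 \in EF.
  by rewrite inE => /orP[/setD1P[]//|/andP[/eqP->]].
have f_inst y : y \in DF -> y.1 == f -> y = (f, Ordinal k_gt0).
  case: y => a b; rewrite inE /= => /orP[/setD1P[/negbTE ->]//|].
  by case/andP => /eqP -> /eqP b0 _; congr pair; apply: val_inj.
have imf_inj f' : f' != f -> phi @: f' != phi @: f.
  by apply: contra => /eqP/(imset_inj phi_inj)->.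
exists (psi @: DF); last split.
- exists phi, psi; split => //.
  + move=> y1 y2 y1D y2D; rewrite /psi.
    case: ifP => e1; case: ifP => e2.
    * by rewrite (f_inst _ y1D e1) (f_inst _ y2D e2).
    * by case=> eq_im; move: (imf_inj _ (negbT e2)); rewrite eq_im eqxx.
    * by case=> eq_im; move: (imf_inj _ (negbT e1)); rewrite eq_im eqxx.
    * by case: y1 y2 {y1D y2D e1 e2} => a1 b1 [a2 b2] [/(imset_inj phi_inj)-> ->].
  + move=> y yD; have phiyG := subsetP sHG _ (phiE _ (inEF _ yD)).
    by rewrite /psi inE; case: ifP => [/eqP <-|_].
- by apply/imsetP; exists (f, Ordinal k_gt0); rewrite /psi ?inE /= ?eqxx ?andbT ?orbT.
apply/subsetP => z /setD1P[+ /imsetP[y yD zE]]; rewrite zE /psi.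
case: ifP => [_|yf _]; first by rewrite eqxx.
by rewrite !inE /= imf_inj ?yf // phiE ?inEF.
Qed.

Lemma mrank_Gk_edges_add (I : {set {set ({set V} * 'I_k)}}) S g phi :
  is_matroid (Gk_edges k EG) I -> weakly_Fk_sat EG EF I ->
  g |: S \subset EG -> is_copy (g |: S) EF phi -> g \in copy_edges EF phi ->
  mrank I (Gk_edges k (g |: S)) = mrank I (Gk_edges k S).
Proof.
move=> matroidI satI sG copy_phi /imsetP[f fEF gE]; subst g.
have -> : Gk_edges k (phi @: f |: S) = Gk_edges k S :|: Gk_edges k [set phi @: f].
  by apply/setP => z; rewrite !inE orbC.
apply: (mrank_setU_cycles matroidI) => -[e j]; rewrite !inE /= => /eqP->.
have [C copyC [xC sC]] := Fke_copy_through j sG copy_phi fEF.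
exists C; first exact: satI copyC.
split=> //; apply: subset_trans sC _; apply/subsetP => z; rewrite !inE.
by case/andP => /negbTE ->.
Qed.

Lemma mrank_Gk_edges_wsat_ok (I : {set {set ({set V} * 'I_k)}}) H :
  is_matroid (Gk_edges k EG) I -> weakly_Fk_sat EG EF I -> wsat_ok EG EF H ->
  mrank I (Gk_edges k EG) = mrank I (Gk_edges k H).
Proof.
move=> matroidI satI [sHG [s [_ defs addable]]].
have sG t : H :|: [set x in take t s] \subset EG.
  rewrite subUset sHG; apply/subsetP => z; rewrite inE => /mem_take zs.
  have : z \in [set x in s] by rewrite inE.
  by rewrite defs => /setDP[].
have rank_take t : t <= size s ->
    mrank I (Gk_edges k (H :|: [set x in take t s])) = mrank I (Gk_edges k H).
  elim: t => [|t IHt] lt_ts; first by rewrite take0 set_nil setU0.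
  have [phi [copy_phi st_phi]] := addable t lt_ts.
  have defH : H :|: [set x in take t.+1 s] =
              nth set0 s t |: (H :|: [set x in take t s]).
    by apply/setP => z; rewrite (take_nth set0) // !inE mem_rcons in_cons orbCA.
  rewrite defH in copy_phi *.
  rewrite (mrank_Gk_edges_add matroidI satI _ copy_phi st_phi) -?defH //.
  exact/IHt/ltnW.
have defEG : H :|: [set x in s] = EG.
  apply/setP => z; rewrite defs !inE.
  by case: (boolP (z \in H)) => // /(subsetP sHG) ->.
by rewrite -(rank_take (size s)) // take_size defEG.
Qed.

End Blowup.

Theorem lemma3 (V W : finType) (EG : {set {set V}}) (EF : {set {set W}})
  (k : nat) :
  simple_graph EG -> simple_graph EF -> 0 < k ->
  rksat k EG EF <= k * wsat EG EF.
Proof.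
move=> _ _ _; apply/bigmax_leqP => I /asboolP[matroidI satI].
apply: (big_ind (fun n => mrank I (Gk_edges k EG) <= k * n)).
- by rewrite -card_Gk_edges mrank_le_card.
- by move=> a b ha hb; rewrite minnMr leq_min ha hb.
move=> H /asboolP okH; rewrite (mrank_Gk_edges_wsat_ok matroidI satI okH).
by rewrite -card_Gk_edges mrank_le_card.
Qed.
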